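(* Consider an additive random utility model with $n$ alternatives, i.e. a random vector $\epsilon=(\epsilon^{(1)},\dots,\epsilon^{(n)})^T$ such that (i) $\epsilon$ has zero mean, its joint distribution is absolutely continuous with respect to Lebesgue measure and fully supported on $\mathbb{R}^n$; and (ii) for all $k\neq m$ the density $g_{k,m}$ of the difference $\epsilon^{(m)}-\epsilon^{(k)}$ attains its maximum at some point $\bar z_{k,m}\in\mathbb{R}$ (a mode). Let $E(u)=\mathbb{E}_\epsilon\left(\max_{1\le i\le n} u^{(i)}+\epsilon^{(i)}\right)$ be the surplus function and, for $\eta>0$, let $\tilde E(U;\eta)=\eta\, E(U/\eta)$. Assume $\mathbb{E}\left(\max_{1\le i\le n}\epsilon^{(i)}\right)\le \alpha$. Consider the following online procedure over $T$ rounds: set $U_0=\mathbf{0}$; for $t=1,\dots,T$ the agent chooses $x_t=\nabla\tilde E(U_{t-1};\eta)\in\Delta_n$, then an (possibly adversarial) reward vector $u_t\in\mathbb{R}^n$ with $\|u_t\|_\infty\le K$ is revealed, the agent gains $\langle x_t,u_t\rangle$, and $U_t=U_{t-1}+u_t$. Define the regret $R(T)=\max_{x\in\Delta_n}\langle x,U_T\rangle-\sum_{t=1}^T\langle x_t,u_t\rangle$. Then, with $L=2\sum_{i=1}^n\sum_{j\neq i} g_{i,j}(\bar z_{i,j})$, \[ R(T)\le \eta\cdot\alpha+\frac{L\cdot K^2\cdot T}{\eta}. \] Optimizing over the scaling parameter $\eta$ yields $R(T)\le 2\sqrt{\alpha\, L\, T}\cdot K$; in particular the procedure is Hannan-consistent,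 i.e. $R(T)/T\to 0$.
   Context: $\Delta_n=\{p\in\mathbb{R}^n: \sum_i p^{(i)}=1,\ p^{(i)}\ge 0\}$ is the probability simplex; $\mathbf{0}$ is the zero vector; $\|u\|_\infty=\max_i|u^{(i)}|$. The parameter $\eta$ is a fixed positive step size (the optimized bound corresponds to choosing $\eta$ depending on $T$, $K$, $L$, $\alpha$). *)

From HB Require Import structures.
From mathcomp Require Import all_boot all_order all_algebra.
From mathcomp Require Import all_classical all_reals all_analysis.
Set Implicit Arguments. Unset Strict Implicit. Unset Printing Implicit Defensive.
Import Order.TTheory GRing.Theory Num.Theory.
Import numFieldNormedType.Exports.
Local Open Scope classical_set_scope.
Local Open Scope ring_scope.

Section ARUM.
Variable R : realType.

Definition lebesgue_null (n : nat) (A : set ('I_n -> R)) : Prop :=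
  forall e : R, 0 < e ->
    exists (a b : nat -> 'I_n -> R),
      (forall k i, a k i <= b k i) /\
      A `<=` \bigcup_k [set x | forall i, a k i <= x i <= b k i] /\
      (\sum_(0 <= k <oo) (\prod_(i < n) (b k i - a k i))%:E < e%:E)%E.

Definition simplex (n : nat) : set 'rV[R]_n :=
  [set p | (forall i, 0 <= p 0 i) /\ \sum_(i < n) p 0 i = 1].

Definition dotp (n : nat) (x y : 'rV[R]_n) : R := \sum_(i < n) x 0 i * y 0 i.

Definition surplus d (Omega : measurableType d) (P : probability Omega R)
  (n : nat) (eps : 'I_n -> Omega -> R) (u : 'rV[R]_n) : R :=
  fine (\int[P]_w (\big[Order.max/-oo%E]_(i < n) ((u 0 i + eps i w)%:E))%E).

Definition surplus_scaled d (Omega : measurableType d) (P : probability Omega R)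
  (n : nat) (eps : 'I_n -> Omega -> R) (eta : R) (U : 'rV[R]_n) : R :=
  eta * surplus P eps (eta^-1 *: U).

Definition grad (n : nat) (f : 'rV[R]_n -> R) (U : 'rV[R]_n) : 'rV[R]_n :=
  \row_(i < n) 'D_(delta_mx 0 i) f U.

Definition cumul (n : nat) (u : nat -> 'rV[R]_n) (t : nat) : 'rV[R]_n :=
  \sum_(1 <= s < t.+1) u s.

End ARUM.

From HB Require Import structures.
From mathcomp Require Import all_boot all_order all_algebra.
From mathcomp Require Import all_classical all_reals all_analysis.
From mathcomp Require Import measurable_realfun ring lra.
Import Order.TTheory GRing.Theory Num.Theory.
Import numFieldNormedType.Exports.
Local Open Scope classical_set_scope.
Local Open Scope ring_scope.
Set Implicit Arguments. Unset Strict Implicit. Unset Printing Implicit Defensive.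

(* Write F(U) := E[max_i (U_i + eta eps_i)], so that the scaled surplus is F, and
   let p(U) be the law of the first index attaining that maximum.  Pointwise,
   the maximum of U + V + eta eps exceeds its value at the index chosen for U,
   which gives 0 <= F(U + V) - F(U) - <p(U), V>.  Conversely, on the event that
   i is chosen the excess is at most sum_(j <> i) (V_j - V_i + eta (Y - t))^+
   with Y = eps_j - eps_i <= t, and since Y has a density bounded by
   G_ij = g_ij(zbar_ij), each term has expectation at most G_ij (2K)^2 / (2 eta)
   (compute it with a layer-cake Riemann sum and let the mesh go to zero).
   So F(U + V) - F(U) - <p(U), V> <= L |V|_oo^2 / eta: F is differentiable with
   gradient p(U) in the simplex, and summing over the rounds telescopes to
   sum_t <x_t, u_t> >= F(U_T) - F(0) - T L K^2 / eta.  Finally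
   max_x <x, U_T> <= F(U_T) because eps has zero mean, and
   F(0) = eta E[max_i eps_i] <= eta alpha. *)
Section FirstArgmax.
Variables (R : realDomainType) (n : nat).
Implicit Types (x : 'I_n.+1 -> R) (i j : 'I_n.+1).

Definition vmax x : R := fine (\big[Order.max/-oo%E]_i (x i)%:E).

Lemma bigmax_attained x : exists i, (\big[Order.max/-oo%E]_i (x i)%:E)%E = (x i)%:E.
Proof.
have [i _ ->] := @eq_bigmax _ _ _ -oo%E ord0 xpredT (fun i => (x i)%:E) isT
  (fun i _ => leNye _).
by exists i.
Qed.

Lemma bigmax_EFin x : (\big[Order.max/-oo%E]_i (x i)%:E)%E = (vmax x)%:E.
Proof. by have [i E] := bigmax_attained x; rewrite /vmax E. Qed.

Lemma vmax_attained x : exists i, vmax x = x i.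
Proof. by have [i E] := bigmax_attained x; exists i; rewrite /vmax E. Qed.

Lemma vmax_ge x i : x i <= vmax x.
Proof. by rewrite -lee_fin -bigmax_EFin; apply: le_bigmax. Qed.

Lemma vmax_subr_le_sum x i : vmax x - x i <= \sum_(j | j != i) Num.max 0 (x j - x i).
Proof.
have [k ->] := vmax_attained x.
have [->|ki] := eqVneq k i; first by rewrite subrr sumr_ge0 // => j _; rewrite le_max lexx.
rewrite (bigD1 k) //= ler_wpDr ?le_max ?lexx ?orbT //.
by apply: sumr_ge0 => j _; rewrite le_max lexx.
Qed.

(* Ties go to the smallest index, so exactly one index is selected. *)
Definition first_argmax x i : bool :=
  [forall j : 'I_n.+1, if (j < i)%N then x j < x i else x j <= x i].

Lemma first_argmax_ge x i j : first_argmax x i -> x j <= x i.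
Proof. by move=> /forallP/(_ j); case: ifP => // _ /ltW. Qed.

Lemma first_argmax_vmax x i : first_argmax x i -> vmax x = x i.
Proof.
move=> xi; apply/eqP; rewrite eq_le vmax_ge andbT.
by have [k ->] := vmax_attained x; apply: first_argmax_ge.
Qed.

Lemma first_argmax_uniq x i j : first_argmax x i -> first_argmax x j -> i = j.
Proof.
move=> xi xj; apply/val_inj; case: (ltngtP i j) => // ij.
  by move/forallP: xj => /(_ i); rewrite ij ltNge first_argmax_ge.
by move/forallP: xi => /(_ j); rewrite ij ltNge first_argmax_ge.
Qed.

Lemma exists_first_argmax x : exists i, first_argmax x i.
Proof.
have [k xk] := vmax_attained x.
have Pk : vmax x <= x k by rewrite xk.
have [i Pi imin] := @arg_minnP _ k (fun i => vmax x <= x i) val Pk.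
have xi : x i = vmax x by apply/eqP; rewrite eq_le vmax_ge Pi.
exists i; apply/forallP => j; rewrite xi vmax_ge; case: ifP => // ji.
by rewrite ltNge; apply: contraTN ji => /imin; rewrite -leqNgt.
Qed.

Lemma sum_first_argmax x i (f : 'I_n.+1 -> R) : first_argmax x i ->
  \sum_j (first_argmax x j)%:R * f j = f i.
Proof.
move=> xi; rewrite (bigD1 i) //= xi mul1r big1 ?addr0 // => j ji.
by case: (boolP (first_argmax x j)) => [/(first_argmax_uniq xi) ij|_];
  [move: ji; rewrite ij eqxx | rewrite mul0r].
Qed.

Lemma vmax_scale x (a : R) : 0 < a -> vmax (fun i => a * x i) = a * vmax x.
Proof.
move=> a0; have [i xi] := exists_first_argmax x.
have axi : first_argmax (fun i => a * x i) i.
  by apply/forallP => j; move/forallP: xi => /(_ j); rewrite ltr_pM2l // ler_pM2l.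
by rewrite (first_argmax_vmax axi) (first_argmax_vmax xi).
Qed.

End FirstArgmax.

Section LayerCake.
Variable R : realFieldType.

Lemma maxr0_le_layer_sum (N : nat) (h y : R) : 0 <= h -> y <= N%:R * h ->
  Num.max 0 y <= h * \sum_(k < N) (((k%:R * h < y)%R)%:R : R).
Proof.
move=> h0; elim: N y => [|N IH] y; first by rewrite mul0r big_ord0 mulr0 ge_max lexx.
move=> yN; rewrite big_ord_recl /= mul0r.
under eq_bigr => k _ do rewrite /bump /= add1n -addn1 natrD mulrDl mul1r -ltrBrDr.
have [y0|y0] := leP y 0.
  rewrite mulr_ge0 // addr_ge0 //.
  by apply: sumr_ge0 => k _; case: (_ < _).
have := IH (y - h); rewrite mulrDr mulr1.
have : y - h <= Num.max 0 (y - h) by rewrite le_max lexx orbT.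
rewrite -natr1 in yN; lra.
Qed.

Lemma sum_subn_natr (N : nat) : \sum_(k < N) ((N - k)%:R : R) = N%:R * (N%:R + 1) / 2.
Proof.
elim: N => [|N IH]; first by rewrite big_ord0 !mul0r.
rewrite big_ord_recl /= subn0.
under eq_bigr => k _ do rewrite /bump /= add1n subSS.
by rewrite IH -natr1; field.
Qed.

End LayerCake.

Lemma le_of_forall_le_succ_div (R : archiRealFieldType) (a c : R) : 0 <= c ->
  (forall N : nat, (0 < N)%N -> a <= (N%:R + 1) / N%:R * c) -> a <= c.
Proof.
move=> c0 ha; apply/ler_addgt0Pr => e e0.
pose N := (Num.truncn (c / e)).+1.
have ceN : c / e < N%:R := truncnS_gt _.
have N0 : 0 < N%:R :> R by rewrite ltr0n.
apply: (le_trans (ha N isT)); rewrite mulrDl mulfV ?gt_eqF // mulrDl !mul1r lerD2l.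
rewrite mulrC ler_pdivrMr // mulrC -ler_pdivrMr //; exact: ltW.
Qed.

Lemma mx_entry_norm_le (R : realDomainType) m n (x : 'M[R]_(m, n)) i j : `|x i j| <= `|x|.
Proof.
rewrite [leRHS]mx_normrE.
exact: (le_bigmax _ (fun ij : 'I_m * 'I_n => `|x ij.1 ij.2|) (i, j)).
Qed.

Section QuadraticGap.
Variables (R : realType) (n : nat) (f : 'rV[R]_n.+1 -> R) (p U : 'rV[R]_n.+1) (C : R).
Hypothesis C_ge0 : 0 <= C.
Hypothesis f_gap : forall V, `|f (U + V) - f U - dotp p V| <= C * `|V| ^+ 2.

Lemma dotp_linear : linear (dotp p).
Proof.
move=> a x y; rewrite /dotp (_ : a *: \sum_i _ = a * \sum_i p 0 i * x 0 i) //.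
rewrite mulr_sumr -big_split; apply: eq_bigr => i _.
by rewrite !mxE mulrDr mulrCA.
Qed.

Lemma differentiable_quadratic_gap : differentiable f U /\ grad f U = p.
Proof.
pose dotpL : {linear 'rV[R]_n.+1 -> R} :=
  HB.pack (dotp p) (GRing.isLinear.Build R _ _ _ (dotp p) dotp_linear).
have dotp_cont : continuous dotpL.
  apply: bounded_linear_continuous; exists (\sum_i `|p 0 i|); split; first exact: num_real.
  move=> M hM; apply: filterS (nbhs0_lt ltr01) => x x1 /=.
  apply/ltW/(le_lt_trans _ hM); apply: le_trans (ler_norm_sum _ _ _) _.
  apply: ler_sum => i _; rewrite normrM -[leRHS]mulr1; apply: ler_wpM2l => //.
  exact/ltW/(le_lt_trans (mx_entry_norm_le x 0 i)).
(* The ascription on 0 makes the little-o elaborate in the normed module of row vectors. *)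
have df : f \o shift U = cst (f U) + dotpL +o_ (0 : 'rV[R]_n.+1) id.
  apply/eqaddoP => e e0; have C1 : 0 < C + 1 by rewrite ltr_wpDl.
  apply: filterS (nbhs0_lt (divr_gt0 e0 C1)) => x hx /=.
  have -> : (f \o +%R^~ U - (cst (f U) + dotp p)) x = f (U + x) - f U - dotp p x.
    by rewrite /= opprD addrA [U + x]addrC.
  apply: le_trans (f_gap x) _.
  have := normr_ge0 x; rewrite ltr_pdivlMr // in hx; nra.
have dfE := diff_unique dotp_cont df.
have dfU : differentiable f U by apply/diff_locallyP; rewrite dfE.
split => //; apply/rowP => i; rewrite mxE (deriveE _ dfU) dfE /= /dotp.
rewrite (bigD1 i) //= !mxE !eqxx mulr1 big1 ?addr0 // => j ji.
by rewrite !mxE eqxx /= (negbTE ji) mulr0.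
Qed.

End QuadraticGap.

Section RealIntegrals.
Context d (T : measurableType d) (R : realType) (mu : {measure set T -> \bar R}).

Lemma integrable_sumr I (s : seq I) (Q : pred I) (f : I -> T -> R) :
  (forall i, Q i -> mu.-integrable setT (EFin \o f i)) ->
  mu.-integrable setT (EFin \o (fun w => \sum_(i <- s | Q i) f i w)).
Proof.
move=> fi; apply: (eq_integrable _ (fun w => \sum_(i <- s | Q i) (EFin \o f i) w)%E) => //.
  by move=> w _; rewrite /= sumEFin.
exact: integrable_sum.
Qed.

Lemma Rintegral_sumr I (s : seq I) (Q : pred I) (f : I -> T -> R) :
  (forall i, Q i -> mu.-integrable setT (EFin \o f i)) ->
  \int[mu]_w (\sum_(i <- s | Q i) f i w) = \sum_(i <- s | Q i) \int[mu]_w f i w.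
Proof.
move=> fi; elim: s => [|a s IH].
  by under eq_Rintegral do rewrite big_nil; rewrite big_nil Rintegral_cst // mul0r.
under eq_Rintegral do rewrite big_cons.
rewrite big_cons; case: ifP => Qa; last by rewrite IH.
by rewrite RintegralD ?IH //; [exact: fi | exact: integrable_sumr].
Qed.

Lemma Rintegral_indic (A : set T) : measurable A -> \int[mu]_w \1_A w = fine (mu A).
Proof. by move=> mA; rewrite /Rintegral integral_indic // setIT. Qed.

Lemma integrable_scaler (k : R) (f : T -> R) :
  mu.-integrable setT (EFin \o f) -> mu.-integrable setT (EFin \o (fun w => k * f w)).
Proof.
move=> fi; apply: (eq_integrable _ (fun w => k%:E * (EFin \o f) w)%E) => //.
exact: integrableZl.
Qed.

Lemma integrable_subr (f g : T -> R) :
  mu.-integrable setT (EFin \o f) -> mu.-integrable setT (EFin \o g) ->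
  mu.-integrable setT (EFin \o (fun w => f w - g w)).
Proof.
move=> fi gi; apply: (eq_integrable _ ((EFin \o f) \- (EFin \o g))%E) => //.
exact: integrableB.
Qed.

Lemma integrable_indicM (A : set T) (f : T -> R) : measurable A ->
  mu.-integrable setT (EFin \o f) ->
  mu.-integrable setT (EFin \o (fun w => \1_A w * f w)).
Proof.
move=> mA fi; apply: (eq_integrable _ ((EFin \o \1_A) \* (EFin \o f))%E) => //.
apply: integrableMr => //.
exists 1; split => // r r1 w _ /=; rewrite indicE.
by case: (_ \in _); rewrite ?normr1 ?normr0 ltW // (lt_trans _ r1).
Qed.

End RealIntegrals.

Section BoundedDensity.
Context (R : realType) d (Omega : measurableType d) (P : probability Omega R).
Variables (Y : Omega -> R) (g : R -> R) (G : R).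
Hypothesis mY : measurable_fun setT Y.
Hypothesis g_ge0 : forall z, 0 <= g z.
Hypothesis mg : measurable_fun setT g.
Hypothesis Y_density : forall A : set R, measurable A ->
  P [set w | A (Y w)] = (\int[lebesgue_measure]_(z in A) (g z)%:E)%E.
Hypothesis g_le : forall z, g z <= G.

Lemma measurable_preimage_itv (l r : R) : measurable [set w | `]l, r]%classic (Y w)].
Proof. by rewrite -[X in measurable X]setTI; apply: mY. Qed.

Lemma prob_itv_le (l r : R) : l <= r ->
  fine (P [set w | `]l, r]%classic (Y w)]) <= G * (r - l).
Proof.
move=> lr; have mA := measurable_preimage_itv l r.
rewrite -lee_fin fineK ?fin_num_measure // Y_density //.
have -> : (G * (r - l))%:E = (\int[lebesgue_measure]_(z in `]l, r]) G%:E)%E.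
  rewrite integral_cst //= lebesgue_measure_itv /= lte_fin.
  case: ltP => [_|rl]; first by rewrite -EFinB -EFinM.
  have -> : r = l by apply/le_anti; rewrite rl lr.
  by rewrite subrr mulr0 mule0.
apply: ge0_le_integral => //.
- by move=> z _; rewrite lee_fin.
- by apply/measurable_EFinP; apply: measurable_funS mg.
- by move=> z _; rewrite lee_fin.
Qed.

(* A Riemann sum for the hinge z |-> (z - t + N s)^+ of Y on {Y <= t}, with step s:
   its expectation only involves probabilities of intervals. *)
Definition layer (t s : R) (N : nat) (w : Omega) : R :=
  s * \sum_(k < N) \1_([set w | `](t - (N - k)%:R * s), t]%classic (Y w)]) w.

Lemma layer_ge0 t s N w : 0 <= s -> 0 <= layer t s N w.
Proof. by move=> s0; rewrite mulr_ge0 // sumr_ge0 // => k _; rewrite indicE. Qed.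

Lemma maxr0_le_layer t s N w : 0 <= s -> Y w <= t ->
  Num.max 0 (Y w - t + N%:R * s) <= layer t s N w.
Proof.
move=> s0 Yt; apply: le_trans (@maxr0_le_layer_sum _ N _ _ s0 _) _; first lra.
rewrite /layer; apply: ler_wpM2l => //; apply: ler_sum => k _; rewrite indicE.
case: (boolP (_ < _)) => // kY; rewrite mem_set //= in_itv /= Yt andbT.
by rewrite natrB ?(ltnW (ltn_ord k)) // mulrBl; lra.
Qed.

Lemma integrable_layer t s N : P.-integrable setT (EFin \o layer t s N).
Proof.
apply: integrable_scaler; apply: integrable_sumr => k _.
exact/integrable_indic/measurable_preimage_itv.
Qed.

Lemma Rintegral_layer_le t s N : 0 <= s ->
  \int[P]_w layer t s N w <= G * s ^+ 2 * (N%:R * (N%:R + 1) / 2).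
Proof.
move=> s0; have mI k := measurable_preimage_itv (t - (N - k)%:R * s) t.
rewrite RintegralZl //; last by apply: integrable_sumr => k _; apply: integrable_indic.
rewrite Rintegral_sumr => [|k _]; last exact: integrable_indic.
rewrite -sum_subn_natr.
have -> : G * s ^+ 2 * \sum_(k < N) (N - k)%:R =
    s * (G * ((\sum_(k < N) (N - k)%:R) * s)) by ring.
apply: ler_wpM2l => //; rewrite mulr_suml mulr_sumr.
apply: ler_sum => k _; rewrite Rintegral_indic //.
apply: le_trans (prob_itv_le _) _; last by rewrite opprB addrC subrK.
by rewrite lerBlDr lerDl mulr_ge0.
Qed.

End BoundedDensity.

Section ExpectedMax.
Context (R : realType) d (Omega : measurableType d) (P : probability Omega R).
Variables (n : nat) (eps : 'I_n.+1 -> Omega -> R) (b : R).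
Hypothesis meps : forall i, measurable_fun setT (eps i).
Hypothesis ieps : forall i, P.-integrable setT (fun w => (eps i w)%:E).
Implicit Types (U V : 'rV[R]_n.+1) (w : Omega).

Definition noisy U w : 'I_n.+1 -> R := fun i => U 0 i + b * eps i w.

Definition choice_set U i := [set w | first_argmax (noisy U w) i].

Definition expected_max U := \int[P]_w vmax (noisy U w).

Definition choice_prob U : 'rV[R]_n.+1 := \row_i fine (P (choice_set U i)).

Lemma measurable_noisy U i : measurable_fun setT (fun w => noisy U w i).
Proof. by apply: measurable_funD => //; apply: measurable_funM. Qed.

Lemma integrable_noisy U i : P.-integrable setT (EFin \o (fun w => noisy U w i)).
Proof.
apply: (eq_integrable _ (fun w => (U 0 i)%:E + b%:E * (eps i w)%:E)%E) => //.
apply: integrableD => //; first exact: finite_measure_integrable_cst.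
exact: integrableZl.
Qed.

Lemma measurable_choice_set U i : measurable (choice_set U i).
Proof.
have measurable_cmp (lt : bool) j : measurable [set w |
    if lt then noisy U w j < noisy U w i else noisy U w j <= noisy U w i].
  case: lt; rewrite -[X in measurable X]setTI.
    exact: measurable_fun_ltr (measurable_noisy U j) (measurable_noisy U i) _ _ _.
  exact: measurable_fun_ler (measurable_noisy U j) (measurable_noisy U i) _ _ _.
rewrite (_ : choice_set U i = \bigcap_(j in [set: 'I_n.+1]) [set w |
    if (j < i)%N then noisy U w j < noisy U w i else noisy U w j <= noisy U w i]).
  by apply: fin_bigcap_measurable => // j _; apply: measurable_cmp.
apply/seteqP; split => w; rewrite /choice_set /=.
  by move=> /forallP xi j _; apply: xi.
by move=> xi; apply/forallP => j; apply: xi.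
Qed.

Lemma indic_choice_set U i w :
  \1_(choice_set U i) w = (first_argmax (noisy U w) i)%:R :> R.
Proof.
by rewrite indicE; congr (nat_of_bool _)%:R; apply/idP/idP => [/set_mem|/mem_set].
Qed.

Lemma sum_indic_choice_set U i w (f : 'I_n.+1 -> R) : choice_set U i w ->
  \sum_j \1_(choice_set U j) w * f j = f i.
Proof. by under eq_bigr do rewrite indic_choice_set; apply: sum_first_argmax. Qed.

Lemma sum_indic_choice_set1 U w : \sum_i \1_(choice_set U i) w = 1 :> R.
Proof.
have [i xi] := exists_first_argmax (noisy U w).
by rewrite -[RHS](sum_indic_choice_set (fun=> 1) xi); apply: eq_bigr => j _; rewrite mulr1.
Qed.

Lemma vmax_noisyE U w : vmax (noisy U w) = \sum_i \1_(choice_set U i) w * noisy U w i.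
Proof.
have [i xi] := exists_first_argmax (noisy U w).
by rewrite (sum_indic_choice_set _ xi) (first_argmax_vmax xi).
Qed.

Lemma integrable_vmax_noisy U : P.-integrable setT (EFin \o (fun w => vmax (noisy U w))).
Proof.
under [fun w => vmax _]eq_fun do rewrite vmax_noisyE.
apply: integrable_sumr => i _; apply: integrable_indicM; first exact: measurable_choice_set.
exact: integrable_noisy.
Qed.

Lemma choice_prob_simplex U : simplex (choice_prob U).
Proof.
split => [i|]; first by rewrite mxE fine_ge0 // measure_ge0.
under eq_bigr => i _ do rewrite mxE -(Rintegral_indic _ (measurable_choice_set U i)).
rewrite -Rintegral_sumr => [|i _]; last exact: integrable_indic (measurable_choice_set U i).
under eq_Rintegral do rewrite sum_indic_choice_set1.
by rewrite Rintegral_cst // mul1r; exact: (congr1 fine (probability_setT P)).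
Qed.

Section ZeroMean.
Hypothesis eps_mean0 : forall i, (\int[P]_w (eps i w)%:E = 0)%E.

Lemma Rintegral_noisy U i : \int[P]_w noisy U w i = U 0 i.
Proof.
rewrite RintegralD //; last 2 first.
- exact: finite_measure_integrable_cst.
- exact: integrableZl (ieps i).
have eps0 : \int[P]_w eps i w = 0 := congr1 fine (eps_mean0 i).
have P1 : fine (P setT) = 1 := congr1 fine (probability_setT P).
rewrite RintegralZl //; last exact: ieps.
by rewrite Rintegral_cst // eps0 P1 mulr0 addr0 mulr1.
Qed.

Lemma expected_max_ge U i : U 0 i <= expected_max U.
Proof.
rewrite -Rintegral_noisy; apply: le_Rintegral => //.
- exact: integrable_noisy.
- exact: integrable_vmax_noisy.
- by move=> w _; apply: vmax_ge.
Qed.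

End ZeroMean.

Definition excess U V w :=
  vmax (noisy (U + V) w) - vmax (noisy U w) - \sum_i \1_(choice_set U i) w * V 0 i.

Lemma excessE U V w i : choice_set U i w ->
  excess U V w = vmax (noisy (U + V) w) - noisy (U + V) w i.
Proof.
move=> xi; rewrite /excess (sum_indic_choice_set _ xi) (first_argmax_vmax xi).
by rewrite /noisy mxE; ring.
Qed.

Lemma excess_ge0 U V w : 0 <= excess U V w.
Proof.
have [i xi] := exists_first_argmax (noisy U w).
by rewrite (excessE _ xi) subr_ge0 vmax_ge.
Qed.

Lemma integrable_indic_choiceM U i (c : R) :
  P.-integrable setT (EFin \o (fun w => \1_(choice_set U i) w * c)).
Proof.
apply: integrable_indicM; first exact: measurable_choice_set.
exact: finite_measure_integrable_cst.
Qed.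

Lemma integrable_choice_sum U V :
  P.-integrable setT (EFin \o (fun w => \sum_i \1_(choice_set U i) w * V 0 i)).
Proof. by apply: integrable_sumr => i _; apply: integrable_indic_choiceM. Qed.

Lemma integrable_excess U V : P.-integrable setT (EFin \o excess U V).
Proof.
by apply: integrable_subr; [apply: integrable_subr|]; rewrite ?integrable_choice_sum //;
  apply: integrable_vmax_noisy.
Qed.

Lemma Rintegral_excess U V : \int[P]_w excess U V w =
  expected_max (U + V) - expected_max U - dotp (choice_prob U) V.
Proof.
rewrite RintegralB //; last 2 first.
- by apply: integrable_subr; apply: integrable_vmax_noisy.
- exact: integrable_choice_sum.
rewrite RintegralB //; try exact: integrable_vmax_noisy.
rewrite Rintegral_sumr => [|i _]; last exact: integrable_indic_choiceM.
congr (_ - _); apply: eq_bigr => i _; have mS := measurable_choice_set U i.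
by rewrite RintegralZr ?Rintegral_indic ?mxE //; exact: integrable_indic.
Qed.

Lemma expected_max_gap_ge0 U V :
  0 <= expected_max (U + V) - expected_max U - dotp (choice_prob U) V.
Proof. by rewrite -Rintegral_excess; apply: Rintegral_ge0 => w _; apply: excess_ge0. Qed.

Section Smoothness.
Variables (g : 'I_n.+1 -> 'I_n.+1 -> R -> R) (G : 'I_n.+1 -> 'I_n.+1 -> R).
Hypothesis eps_diff_density : forall k m, k != m ->
  [/\ forall z, 0 <= g k m z,
      measurable_fun setT (g k m),
      forall A : set R, measurable A ->
        P [set w | A (eps m w - eps k w)] =
        (\int[lebesgue_measure]_(z in A) (g k m z)%:E)%E
    & forall z, g k m z <= G k m].
Hypothesis b_gt0 : 0 < b.

Lemma density_bound_ge0 k m : k != m -> 0 <= G k m.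
Proof. by case/eps_diff_density => g0 _ _ gG; apply: le_trans (g0 0) (gG 0). Qed.

Lemma sum_density_bound_ge0 : 0 <= \sum_i \sum_(j | j != i) G i j.
Proof.
by apply: sumr_ge0 => i _; apply: sumr_ge0 => j ji; rewrite density_bound_ge0 // eq_sym.
Qed.

Let pair_layer U V N i j := layer (fun w => eps j w - eps i w) ((U 0 i - U 0 j) / b)
  (Num.max 0 (V 0 j - V 0 i) / (b * N%:R)) N.

Lemma maxr0_noisy_le_layer U V N i j w : (0 < N)%N -> choice_set U i w ->
  Num.max 0 (noisy (U + V) w j - noisy (U + V) w i) <= b * pair_layer U V N i j w.
Proof.
move=> N0 xi; have b0 : b != 0 by rewrite gt_eqF.
have N0' : N%:R != 0 :> R by rewrite pnatr_eq0 -lt0n.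
set Y := eps j w - eps i w; set D := V 0 j - V 0 i; set t := (U 0 i - U 0 j) / b.
set s := Num.max 0 D / (b * N%:R).
have Yt : Y <= t.
  have := first_argmax_ge j xi; rewrite /t /Y /noisy ler_pdivlMr //; nra.
have bYs : b * (Y - t + N%:R * s) = b * Y - (U 0 i - U 0 j) + Num.max 0 D.
  by rewrite /t /s; field; rewrite b0 N0'.
have noisyD : noisy (U + V) w j - noisy (U + V) w i = b * Y - (U 0 i - U 0 j) + D.
  by rewrite /noisy /Y /D !mxE; ring.
apply: (@le_trans _ _ (Num.max 0 (b * (Y - t + N%:R * s)))).
  rewrite ge_max le_max lexx /= noisyD bYs le_max.
  by rewrite lerD2l le_max lexx orbT orbT.
have b_ge0 : 0 <= b by exact: ltW.
rewrite -[X in Num.max X _](mulr0 b) -maxr_pMr //; apply: ler_wpM2l => //.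
by apply: maxr0_le_layer => //; rewrite /s divr_ge0 // ?le_max ?lexx // mulr_ge0.
Qed.

Lemma pair_layer_ge0 U V N i j w : 0 <= pair_layer U V N i j w.
Proof.
by apply: layer_ge0; rewrite divr_ge0 ?le_max ?lexx // mulr_ge0 // ltW.
Qed.

Lemma excess_le_sum_pair_layer U V N w : (0 < N)%N ->
  excess U V w <= \sum_i \sum_(j | j != i) b * pair_layer U V N i j w.
Proof.
move=> N0; have [i xi] := exists_first_argmax (noisy U w).
rewrite (excessE _ xi); apply: le_trans (vmax_subr_le_sum _ i) _.
rewrite [leRHS](bigD1 i) //=; apply: ler_wpDr.
  apply: sumr_ge0 => k _; apply: sumr_ge0 => j _.
  by rewrite mulr_ge0 ?pair_layer_ge0 // ltW.
by apply: ler_sum => j _; apply: maxr0_noisy_le_layer.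
Qed.

Lemma Rintegral_pair_layer_le U V N i j K : (0 < N)%N -> i != j ->
  `|V 0 j - V 0 i| <= 2 * K ->
  b * \int[P]_w pair_layer U V N i j w <= (N%:R + 1) / N%:R * (2 * G i j * K ^+ 2 / b).
Proof.
move=> N0 ij DK; have [g0 mg g_law gG] := eps_diff_density ij.
have b0 : b != 0 by rewrite gt_eqF.
have N0' : N%:R != 0 :> R by rewrite pnatr_eq0 -lt0n.
set M := Num.max 0 (V 0 j - V 0 i).
have M0 : 0 <= M by rewrite le_max lexx.
have M2K : M <= 2 * K.
  by rewrite ge_max (le_trans (normr_ge0 _) DK) (le_trans (ler_norm _) DK).
have MK : M ^+ 2 <= (2 * K) ^+ 2 by rewrite ler_sqr ?nnegrE // (le_trans M0).
have Gij := density_bound_ge0 ij.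
apply: le_trans (ler_wpM2l (ltW b_gt0) (Rintegral_layer_le _ g0 mg g_law gG _ _ _)) _.
- exact: measurable_funB.
- by rewrite divr_ge0 // mulr_ge0 // ltW.
have -> : b * (G i j * (M / (b * N%:R)) ^+ 2 * (N%:R * (N%:R + 1) / 2)) =
    (N%:R + 1) / N%:R * (G i j / (2 * b) * M ^+ 2) by field; rewrite b0 N0'.
apply: ler_wpM2l; first by rewrite divr_ge0 // addr_ge0.
apply: le_trans (ler_wpM2l _ MK) _; first by rewrite divr_ge0 // mulr_ge0 // ltW.
by rewrite [leLHS](_ : _ = 2 * G i j * K ^+ 2 / b) //; field.
Qed.

Lemma expected_max_gap_le_succ_div U V K N : (0 < N)%N -> (forall i, `|V 0 i| <= K) ->
  expected_max (U + V) - expected_max U - dotp (choice_prob U) V <=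
  (N%:R + 1) / N%:R * ((2 * \sum_i \sum_(j | j != i) G i j) * K ^+ 2 / b).
Proof.
move=> N0 VK.
have ipl i j : P.-integrable setT (EFin \o (fun w => b * pair_layer U V N i j w)).
  by apply/integrable_scaler/integrable_layer/measurable_funB.
have DK i j : `|V 0 j - V 0 i| <= 2 * K.
  by rewrite mulr2n mulrDl mul1r; apply: le_trans (ler_normB _ _) (lerD _ _).
rewrite -Rintegral_excess.
pose layers w := \sum_i \sum_(j | j != i) b * pair_layer U V N i j w.
apply: (le_trans (@le_Rintegral _ _ _ _ _ _ layers _ (integrable_excess U V) _ _)) => //.
- by apply: integrable_sumr => i _; apply: integrable_sumr => j _.
- by move=> w _; apply: excess_le_sum_pair_layer.
rewrite [leRHS](_ : _ = \sum_i \sum_(j | j != i)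
    (N%:R + 1) / N%:R * (2 * G i j * K ^+ 2 / b)); last first.
  set S := \sum_i _; transitivity ((N%:R + 1) / N%:R * 2 * K ^+ 2 / b * S); first ring.
  rewrite mulr_sumr; apply: eq_bigr => i _; rewrite mulr_sumr; apply: eq_bigr => j _; ring.
rewrite Rintegral_sumr => [|i _]; last by apply: integrable_sumr => j _.
apply: ler_sum => i _; rewrite Rintegral_sumr => [|j _] //.
apply: ler_sum => j ji; rewrite RintegralZl //; last exact/integrable_layer/measurable_funB.
by apply: Rintegral_pair_layer_le; rewrite // eq_sym.
Qed.

Lemma expected_max_gap_le U V K : (forall i, `|V 0 i| <= K) ->
  expected_max (U + V) - expected_max U - dotp (choice_prob U) V <=
  (2 * \sum_i \sum_(j | j != i) G i j) * K ^+ 2 / b.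
Proof.
move=> VK; apply: le_of_forall_le_succ_div => [|N N0].
  by rewrite divr_ge0 ?(ltW b_gt0) // mulr_ge0 ?sqr_ge0 // mulr_ge0 // sum_density_bound_ge0.
exact: expected_max_gap_le_succ_div.
Qed.

Lemma expected_max_grad U :
  differentiable expected_max U /\ grad expected_max U = choice_prob U.
Proof.
apply: (@differentiable_quadratic_gap _ _ _ _ _ ((2 * \sum_i \sum_(j | j != i) G i j) / b)).
  by rewrite divr_ge0 ?(ltW b_gt0) // mulr_ge0 // sum_density_bound_ge0.
move=> V; rewrite ger0_norm ?expected_max_gap_ge0 // mulrAC.
by apply: expected_max_gap_le => i; apply: mx_entry_norm_le.
Qed.

End Smoothness.

End ExpectedMax.

Section OnlineLearning.
Variables (R : realType) (n : nat).
Implicit Types (u : nat -> 'rV[R]_n) (T : nat).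

Lemma cumul0 u : cumul u 0 = 0.
Proof. by rewrite /cumul big_geq. Qed.

Lemma cumulS u t : cumul u t.+1 = cumul u t + u t.+1.
Proof. by rewrite /cumul big_nat_recr. Qed.

Lemma potential_telescope_le (H : 'rV[R]_n -> R) (x : nat -> 'rV[R]_n) u T (B : R) :
  (forall t, (1 <= t <= T)%N ->
     H (cumul u t) - H (cumul u t.-1) - dotp (x t) (u t) <= B) ->
  H (cumul u T) - H 0 - \sum_(1 <= t < T.+1) dotp (x t) (u t) <= T%:R * B.
Proof.
elim: T => [|T IH] step; first by rewrite cumul0 big_geq // !subrr mul0r.
have /= stepT := step T.+1 (leqnn _).
have IHT : H (cumul u T) - H 0 - \sum_(1 <= t < T.+1) dotp (x t) (u t) <= T%:R * B.
  by apply: IH => t /andP[t0 tT]; apply: step; rewrite t0 leqW.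
rewrite big_nat_recr //= mulrSr mulrDl mul1r; lra.
Qed.

Lemma sup_simplex_dotp_le (U : 'rV[R]_n.+1) (M : R) : (forall i, U 0 i <= M) ->
  sup [set dotp y U | y in @simplex R n.+1] <= M.
Proof.
move=> UM; apply: ge_sup => [|_ [y [y0 y1] <-]].
  exists (dotp (delta_mx 0 ord0) U), (delta_mx 0 ord0) => //.
  split => [i|]; first by rewrite mxE ler0n.
  rewrite (bigD1 ord0) //= mxE !eqxx big1 ?addr0 // => j j0.
  by rewrite mxE eqxx /= (negbTE j0).
rewrite /dotp -[M]mul1r -y1 mulr_suml; apply: ler_sum => i _.
by apply: ler_wpM2l => //; apply: UM.
Qed.

End OnlineLearning.

Section Regret.
Context (R : realType) d (Omega : measurableType d) (P : probability Omega R).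
Variables (n : nat) (eps : 'I_n.+1 -> Omega -> R) (eta : R).
Hypothesis meps : forall i, measurable_fun setT (eps i).
Hypothesis ieps : forall i, P.-integrable setT (fun w => (eps i w)%:E).
Hypothesis eta_gt0 : 0 < eta.

Lemma surplus_scaledE : surplus_scaled P eps eta = expected_max P eps eta.
Proof.
apply/funext => U; rewrite /surplus_scaled /surplus.
under eq_integral do rewrite bigmax_EFin.
rewrite -[fine _]/(Rintegral P setT _) -RintegralZl //; last first.
  apply: (eq_integrable _ _ _ _ (integrable_vmax_noisy 1 meps ieps (eta^-1 *: U))) => // w _.
  by rewrite /noisy /=; under eq_fun do rewrite mul1r.
apply: eq_Rintegral => w _; rewrite -vmax_scale //; congr vmax; apply/funext => i.
by rewrite /noisy mxE mulrDr mulrA mulfV ?gt_eqF // mul1r.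
Qed.

Lemma expected_max0_le (alpha : R) :
  (\int[P]_w (\big[Order.max/-oo%E]_(i < n.+1) (eps i w)%:E) <= alpha%:E)%E ->
  expected_max P eps eta 0 <= eta * alpha.
Proof.
have eps_max_int : P.-integrable setT (fun w => \big[Order.max/-oo%E]_i (eps i w)%:E).
  under eq_fun do rewrite bigmax_EFin.
  apply: (eq_integrable _ _ _ _ (integrable_vmax_noisy 1 meps ieps 0)) => // w _.
  by rewrite /noisy /=; under eq_fun do rewrite mxE add0r mul1r.
move=> max_le; rewrite -surplus_scaledE ler_pM2l // /surplus scaler0.
under eq_integral do under eq_bigr do rewrite mxE add0r.
by rewrite -lee_fin fineK // (integrable_fin_num _ eps_max_int).
Qed.

Section RegretBound.
Variables (g : 'I_n.+1 -> 'I_n.+1 -> R -> R) (G : 'I_n.+1 -> 'I_n.+1 -> R).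
Hypothesis eps_diff_density : forall k m, k != m ->
  [/\ forall z, 0 <= g k m z,
      measurable_fun setT (g k m),
      forall A : set R, measurable A ->
        P [set w | A (eps m w - eps k w)] =
        (\int[lebesgue_measure]_(z in A) (g k m z)%:E)%E
    & forall z, g k m z <= G k m].
Hypothesis eps_mean0 : forall i, (\int[P]_w (eps i w)%:E = 0)%E.
Variables (alpha K : R) (T : nat) (u : nat -> 'rV[R]_n.+1).
Hypothesis max_eps_le :
  (\int[P]_w (\big[Order.max/-oo%E]_(i < n.+1) (eps i w)%:E) <= alpha%:E)%E.
Hypothesis u_le : forall t, (1 <= t <= T)%N -> forall i, `|u t 0 i| <= K.

Lemma expected_max_regret_le :
  sup [set dotp y (cumul u T) | y in @simplex R n.+1]
    - \sum_(1 <= t < T.+1) dotp (choice_prob P eps eta (cumul u t.-1)) (u t)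
  <= eta * alpha + (2 * \sum_i \sum_(j | j != i) G i j) * K ^+ 2 * T%:R / eta.
Proof.
set L := 2 * _; set EM := expected_max P eps eta.
have sup_le := sup_simplex_dotp_le (expected_max_ge eta meps ieps eps_mean0 (cumul u T)).
have EM0 := expected_max0_le max_eps_le.
have step t : (1 <= t <= T)%N -> EM (cumul u t) - EM (cumul u t.-1)
    - dotp (choice_prob P eps eta (cumul u t.-1)) (u t) <= L * K ^+ 2 / eta.
  case: t => // t tT; rewrite cumulS /=.
  by apply: (expected_max_gap_le meps ieps eps_diff_density eta_gt0); apply: u_le.
have := potential_telescope_le step.
have -> : L * K ^+ 2 * T%:R / eta = T%:R * (L * K ^+ 2 / eta) by ring.
rewrite /EM; lra.
Qed.

End RegretBound.

End Regret.

Theorem theorem1 (R : realType) (d : measure_display) (Omega : measurableType d)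
  (P : probability Omega R) (n : nat) (eps : 'I_n -> Omega -> R)
  (g : 'I_n -> 'I_n -> R -> R) (zbar : 'I_n -> 'I_n -> R)
  (alpha eta K : R) (T : nat) (u : nat -> 'rV[R]_n) :
  (0 < n)%N ->
  (* eps is a random vector with zero mean *)
  (forall i, measurable_fun setT (eps i)) ->
  (forall i, P.-integrable setT (fun w => (eps i w)%:E) /\
             (\int[P]_w (eps i w)%:E = 0)%E) ->
  (* joint law absolutely continuous w.r.t. Lebesgue measure on R^n *)
  (forall A : set ('I_n -> R), lebesgue_null A ->
     exists B : set Omega, [/\ measurable B, P B = 0%E &
                              [set w | A (fun i => eps i w)] `<=` B]) ->
  (* joint law fully supported on R^n *)
  (forall a b : 'I_n -> R, (forall i, a i < b i) ->
     (0 < P (\bigcap_(i in [set: 'I_n]) [set w | (a i < eps i w < b i)%R]))%E) ->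
  (* g k m is a density of eps^(m) - eps^(k), with a mode at zbar k m *)
  (forall k m, k != m ->
     [/\ forall z, 0 <= g k m z,
         measurable_fun setT (g k m),
         forall A : set R, measurable A ->
           P [set w | A (eps m w - eps k w)] =
           (\int[lebesgue_measure]_(z in A) (g k m z)%:E)%E
       & forall z, g k m z <= g k m (zbar k m)]) ->
  (* E(max_i eps^(i)) <= alpha *)
  (\int[P]_w (\big[Order.max/-oo%E]_(i < n) (eps i w)%:E) <= alpha%:E)%E ->
  0 < eta ->
  (* adversarial rewards with sup-norm at most K *)
  (forall t, (1 <= t <= T)%N -> forall i, `|u t 0 i| <= K) ->
  let Et := surplus_scaled P eps eta in
  let x := fun t : nat => grad Et (cumul u t.-1) in
  let L := 2 * \sum_(i < n) \sum_(j < n | j != i) g i j (zbar i j) in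
  (forall U : 'rV[R]_n, differentiable Et U /\ simplex (grad Et U)) /\
  sup [set dotp y (cumul u T) | y in @simplex R n]
    - \sum_(1 <= t < T.+1) dotp (x t) (u t)
  <= eta * alpha + L * K ^+ 2 * T%:R / eta.
Proof.
case: n eps g zbar u => [|n] eps g zbar u // _ meps eps_int _ _ density max_eps eta_gt0 u_le.
move=> Et x L; have ieps i := (eps_int i).1; have eps_mean0 i := (eps_int i).2.
have EtE : Et = expected_max P eps eta := surplus_scaledE meps ieps eta_gt0.
have gradE U := expected_max_grad meps ieps density eta_gt0 U.
split=> [U|].
  by rewrite EtE (gradE U).2; split; [exact: (gradE U).1 | exact: choice_prob_simplex].
under eq_bigr => t _ do rewrite /x EtE (gradE _).2.
exact: (expected_max_regret_le meps ieps eta_gt0 density eps_mean0 max_eps u_le).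
Qed.
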